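(* Let $n$ be a positive even integer. For $m=1,\dots,n+1$ and $k=1,\dots,\tfrac n2+1$ put $x_m=\cos\frac{m\pi}{n+2}$ and $y_{m,k}=\cos\frac{2k\pi}{n+3}$ if $m$ is odd, $y_{m,k}=\cos\frac{(2k-1)\pi}{n+3}$ if $m$ is even. For non-negative integers $i,j$ let $$I(i,j):=\sum_{m=1}^{n+1}\sum_{k=1}^{\frac n2+1}(1-x_m^2)(1-y_{m,k}^2)\,U_i(x_m)\,U_j(y_{m,k}).$$ If $i$ is such that $n+2$ divides neither $i$ nor $i+2$, or $j$ is such that $n+3$ divides neither $j$ nor $j+2$, then $I(i,j)=0$. In all other cases, with $\mu,\nu$ integers and $C_n=\frac{8}{(n+2)(n+3)}$, $$I(i,j)=\begin{cases}(2C_n)^{-1}[(-1)^\nu+(-1)^\mu], & i=\nu(n+2),\ j=\mu(n+3),\\ -(2C_n)^{-1}[(-1)^\nu+(-1)^\mu], & i=\nu(n+2),\ j=\mu(n+3)-2,\\ -(2C_n)^{-1}[(-1)^\nu+(-1)^\mu], & i=\nu(n+2)-2,\ j=\mu(n+3),\\ (2C_n)^{-1}[(-1)^\nu+(-1)^\mu], & i=\nu(n+2)-2,\ j=\mu(n+3)-2.\end{cases}$$ No upper bound on $i,j$ is required.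
   Context: $U_j$ denotes the Chebyshev polynomial of the second kind of degree $j$, i.e. $U_j(\cos\theta)=\frac{\sin((j+1)\theta)}{\sin\theta}$. *)

From Stdlib Require Import Reals Lra Lia Arith.
Open Scope R_scope.

(* Chebyshev polynomials of the second kind, by the standard recurrence
   U_0 = 1, U_1 = 2x, U_{j+2} = 2x U_{j+1} - U_j
   (equivalently U_j(cos t) = sin((j+1)t)/sin t). *)
Fixpoint chebU (j : nat) (x : R) : R :=
  match j with
  | O => 1
  | S j' =>
      match j' with
      | O => 2 * x
      | S j'' => 2 * x * chebU j' x - chebU j'' x
      end
  end.

Definition xnode (n m : nat) : R := cos (INR m * PI / INR (n + 2)).

Definition ynode (n m k : nat) : R :=
  if Nat.odd m then cos (2 * INR k * PI / INR (n + 3))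
  else cos ((2 * INR k - 1) * PI / INR (n + 3)).

Definition Isum (n i j : nat) : R :=
  sum_f_R0 (fun m' =>
    let m := S m' in
    sum_f_R0 (fun k' =>
      let k := S k' in
      (1 - (xnode n m)^2) * (1 - (ynode n m k)^2)
        * chebU i (xnode n m) * chebU j (ynode n m k))
      (n / 2)%nat)
    n.

Definition Cn (n : nat) : R := 8 / (INR (n + 2) * INR (n + 3)).

From Stdlib Require Import Reals Arith Lra Lia.
Open Scope R_scope.

(* Substituting x = cos t turns (1 - x^2) U_i(x) into sin t sin((i+1)t), so every term of
   I(i,j) is a product of sine products at the angles m pi/N and l pi/M, where N = n+2 and
   M = n+3.  Odd m use the even l and even m the odd l; splitting the l-sum by parity gives
     I(i,j) = (S_N(i) S_M(j) - S_N(i+N) S_M(j+M)) / 2,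
   where S_N(i) = sum_{m<N} sin(m pi/N) sin((i+1) m pi/N), and shifting i by N produces the
   alternating sign (-1)^m.  By product-to-sum S_N(i) = (c_N(i) - c_N(i+2)) / 2 with
   c_N(p) = sum_{m<N} cos(p m pi/N), and telescoping against sin(p pi/2N) shows
   c_N(p) = N if 2N divides p and (1 - (-1)^p) / 2 otherwise.  So S_N(i) vanishes unless N
   divides i or i+2, and the four remaining cases are read off from the parity of the quotient. *)

Lemma sum_f_R0_lin_comb (u v : nat -> R) (a b : R) (K : nat) :
  sum_f_R0 (fun m => a * u m + b * v m) K = a * sum_f_R0 u K + b * sum_f_R0 v K.
Proof. induction K as [|K IH]; simpl; [|rewrite IH]; ring. Qed.

Lemma sum_f_R0_pairs (f : nat -> R) (h : nat) :
  sum_f_R0 f (2 * h + 2) = f 0%nat + sum_f_R0 (fun k => f (2 * k + 1)%nat + f (2 * k + 2)%nat) h.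
Proof.
  induction h as [|h IH]; [simpl; ring|].
  replace (2 * S h + 2)%nat with (S (S (2 * h + 2))) by lia.
  rewrite !tech5, IH.
  replace (S (2 * h + 2)) with (2 * S h + 1)%nat by lia.
  replace (S (2 * S h + 1)) with (2 * S h + 2)%nat by lia.
  ring.
Qed.

Lemma pow_neg1_odd (m : nat) : (-1) ^ m = if Nat.odd m then -1 else 1.
Proof.
  induction m as [|m IH]; [reflexivity|].
  rewrite Nat.odd_succ, <- Nat.negb_odd. simpl pow. rewrite IH.
  destruct (Nat.odd m); simpl; ring.
Qed.

Lemma pow_neg1_add2 (p : nat) : (-1) ^ (p + 2) = (-1) ^ p.
Proof. rewrite pow_add. simpl. ring. Qed.

Lemma pow_neg1_double_divide (N p : nat) : Nat.divide (2 * N) p -> (-1) ^ p = 1.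
Proof.
  intros [c ->]. replace (c * (2 * N))%nat with (2 * (c * N))%nat by lia.
  apply pow_1_even.
Qed.

Lemma not_divide_mul_add (d q r : nat) : (0 < r < d)%nat -> ~ Nat.divide d (q * d + r).
Proof.
  intros Hr Hd.
  apply Nat.divide_add_cancel_r in Hd; [|exists q; reflexivity].
  apply Nat.divide_pos_le in Hd; lia.
Qed.

Lemma not_divide_double_add2 (N p : nat) :
  (2 <= N)%nat -> Nat.divide (2 * N) p -> ~ Nat.divide (2 * N) (p + 2).
Proof.
  intros HN Hp Hp2.
  apply (Nat.divide_add_cancel_r _ _ _ Hp), Nat.divide_pos_le in Hp2; lia.
Qed.

Lemma not_divide_double (N p : nat) : ~ Nat.divide N p -> ~ Nat.divide (2 * N) p.
Proof. intros Hp H2p. apply Hp, (Nat.divide_trans _ (2 * N)), H2p. apply Nat.divide_factor_r. Qed.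

Lemma not_divide_add_self (N p : nat) : ~ Nat.divide N p -> ~ Nat.divide N (p + N).
Proof.
  intros Hp HpN. apply Hp, (Nat.divide_add_cancel_r N N p (Nat.divide_refl N)).
  rewrite Nat.add_comm. exact HpN.
Qed.

Lemma sin_plus_INR_mul_PI (r : nat) (u : R) : sin (u + INR r * PI) = (-1) ^ r * sin u.
Proof.
  induction r as [|r IH]; [simpl; rewrite Rmult_0_l, Rplus_0_r; ring|].
  rewrite S_INR, Rmult_plus_distr_r, Rmult_1_l, <- Rplus_assoc, neg_sin, IH.
  simpl. ring.
Qed.

Lemma sin_mul_chebU (i : nat) (t : R) : sin t * chebU i (cos t) = sin (INR (S i) * t).
Proof.
  enough (H : sin t * chebU i (cos t) = sin (INR (S i) * t)
              /\ sin t * chebU (S i) (cos t) = sin (INR (S (S i)) * t)) by apply H.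
  induction i as [|i [IH1 IH2]].
  - simpl. rewrite Rmult_1_l. split; [ring|].
    replace ((1 + 1) * t) with (2 * t) by ring. rewrite sin_2a. ring.
  - split; [exact IH2|].
    change (chebU (S (S i)) (cos t)) with (2 * cos t * chebU (S i) (cos t) - chebU i (cos t)).
    replace (sin t * (2 * cos t * chebU (S i) (cos t) - chebU i (cos t)))
      with (2 * cos t * (sin t * chebU (S i) (cos t)) - sin t * chebU i (cos t)) by ring.
    rewrite IH1, IH2, !S_INR.
    replace ((INR i + 1 + 1 + 1) * t) with ((INR i + 1 + 1) * t + t) by ring.
    replace ((INR i + 1) * t) with ((INR i + 1 + 1) * t - t) by ring.
    rewrite sin_plus, sin_minus. ring.
Qed.

Lemma one_sub_cos2_mul_chebU (i : nat) (t : R) :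
  (1 - cos t ^ 2) * chebU i (cos t) = sin t * sin (INR (S i) * t).
Proof.
  rewrite <- sin_mul_chebU.
  replace (1 - cos t ^ 2) with (sin t * sin t) by (pose proof (sin2_cos2 t); unfold Rsqr in *; simpl; lra).
  ring.
Qed.

Lemma sum_cos_mul_telescope (x : R) (K : nat) :
  2 * sin (x / 2) * sum_f_R0 (fun m => cos (INR m * x)) K
  = sin ((2 * INR K + 1) * x / 2) + sin (x / 2).
Proof.
  induction K as [|K IH].
  - simpl. rewrite Rmult_0_l, cos_0. replace ((2 * 0 + 1) * x / 2) with (x / 2) by field. ring.
  - rewrite tech5, Rmult_plus_distr_l, IH, S_INR.
    replace ((2 * (INR K + 1) + 1) * x / 2) with ((INR K + 1) * x + x / 2) by field.
    replace ((2 * INR K + 1) * x / 2) with ((INR K + 1) * x - x / 2) by field.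
    rewrite sin_plus, sin_minus. ring.
Qed.

Definition node_angle (N m : nat) : R := INR m * PI / INR N.

Definition cos_sum (N p : nat) : R :=
  sum_f_R0 (fun m => cos (INR p * node_angle N m)) (N - 1).

Lemma cos_sum_small (N r : nat) : (0 < r < 2 * N)%nat -> cos_sum N r = (1 - (-1) ^ r) / 2.
Proof.
  intros Hr. unfold cos_sum.
  assert (HN : 0 < INR N) by (apply lt_0_INR; lia).
  set (x := INR r * PI / INR N).
  rewrite (sum_eq _ (fun m => cos (INR m * x)))
    by (intros m _; unfold node_angle, x; f_equal; field; lra).
  assert (Hsin : 0 < sin (x / 2)).
  { assert (INR r < 2 * INR N) by (change 2 with (INR 2); rewrite <- mult_INR; apply lt_INR; lia).
    assert (0 < INR r) by (apply lt_0_INR; lia).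
    pose proof PI_RGT_0.
    apply sin_gt_0; unfold x.
    - apply Rdiv_lt_0_compat; [apply Rdiv_lt_0_compat|]; nra.
    - apply Rmult_lt_reg_r with (2 * INR N); [lra|].
      replace (INR r * PI / INR N / 2 * (2 * INR N)) with (INR r * PI) by (field; lra).
      nra. }
  apply Rmult_eq_reg_l with (2 * sin (x / 2)); [|lra].
  rewrite sum_cos_mul_telescope, minus_INR by lia.
  replace ((2 * (INR N - INR 1) + 1) * x / 2) with (- (x / 2) + INR r * PI)
    by (unfold x; simpl; field; lra).
  rewrite sin_plus_INR_mul_PI, sin_neg. field.
Qed.

Lemma cos_sum_mod (N p : nat) : (0 < N)%nat -> cos_sum N p = cos_sum N (p mod (2 * N)).
Proof.
  intro HN. unfold cos_sum. apply sum_eq. intros m _.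
  assert (INR N <> 0) by (apply not_0_INR; lia).
  rewrite (Nat.div_mod p (2 * N)) at 1 by lia.
  rewrite <- (cos_period (INR (p mod (2 * N)) * node_angle N m) (p / (2 * N) * m)).
  f_equal. unfold node_angle. rewrite plus_INR, !mult_INR. simpl. field. assumption.
Qed.

Lemma cos_sum_double_divide (N p : nat) :
  (0 < N)%nat -> Nat.divide (2 * N) p -> cos_sum N p = INR N.
Proof.
  intros HN Hp. rewrite cos_sum_mod, (proj2 (Nat.Lcm0.mod_divide _ _) Hp) by assumption.
  unfold cos_sum. rewrite (sum_eq _ (fun _ => 1)), sum_cte
    by (intros; rewrite Rmult_0_l; apply cos_0).
  replace (S (N - 1)) with N by lia. ring.
Qed.

Lemma cos_sum_not_double_divide (N p : nat) :
  (0 < N)%nat -> ~ Nat.divide (2 * N) p -> cos_sum N p = (1 - (-1) ^ p) / 2.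
Proof.
  intros HN Hp.
  assert (Hr : (0 < p mod (2 * N) < 2 * N)%nat).
  { split; [|apply Nat.mod_upper_bound; lia].
    destruct (p mod (2 * N))%nat eqn:E; [|lia].
    exfalso. apply Hp, Nat.Lcm0.mod_divide, E. }
  rewrite cos_sum_mod, cos_sum_small by assumption.
  rewrite (Nat.div_mod p (2 * N)) at 2 by lia.
  rewrite pow_add, (pow_neg1_double_divide N (2 * N * _)) by apply Nat.divide_factor_l.
  field.
Qed.

Definition sin_prod (N i m : nat) : R := sin (node_angle N m) * sin (INR (S i) * node_angle N m).

Definition sin_sum (N i : nat) : R := sum_f_R0 (sin_prod N i) (N - 1).

Lemma sin_prod_0 (N i : nat) : sin_prod N i 0 = 0.
Proof. unfold sin_prod, node_angle. rewrite Rmult_0_l, Rdiv_0_l, sin_0. ring. Qed.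

Lemma sin_sum_cos_sum (N i : nat) : sin_sum N i = (cos_sum N i - cos_sum N (i + 2)) / 2.
Proof.
  unfold sin_sum, cos_sum, Rdiv.
  rewrite <- minus_sum, Rmult_comm, scal_sum. apply sum_eq. intros m _. unfold sin_prod.
  set (a := node_angle N m).
  replace (INR i * a) with (INR (S i) * a - a) by (rewrite S_INR; ring).
  replace (INR (i + 2) * a) with (INR (S i) * a + a) by (rewrite plus_INR, S_INR; simpl; ring).
  rewrite cos_minus, cos_plus. field.
Qed.

Lemma alt_sin_sum (N i : nat) : (0 < N)%nat ->
  sum_f_R0 (fun m => (-1) ^ m * sin_prod N i m) (N - 1) = sin_sum N (i + N).
Proof.
  intro HN. assert (INR N <> 0) by (apply not_0_INR; lia).
  apply sum_eq. intros m _. unfold sin_prod.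
  replace (INR (S (i + N)) * node_angle N m) with (INR (S i) * node_angle N m + INR m * PI)
    by (unfold node_angle; rewrite !S_INR, plus_INR; field; assumption).
  rewrite sin_plus_INR_mul_PI. ring.
Qed.

Lemma sin_sum_not_divide (N i : nat) : (0 < N)%nat ->
  ~ Nat.divide (2 * N) i -> ~ Nat.divide (2 * N) (i + 2) -> sin_sum N i = 0.
Proof.
  intros HN Hi Hi2.
  rewrite sin_sum_cos_sum, !cos_sum_not_double_divide, pow_neg1_add2 by assumption.
  field.
Qed.

Lemma sin_sum_double_divide (N i : nat) : (2 <= N)%nat ->
  Nat.divide (2 * N) i -> sin_sum N i = INR N / 2.
Proof.
  intros HN Hi.
  rewrite sin_sum_cos_sum, cos_sum_double_divide, cos_sum_not_double_divide,
    pow_neg1_add2, (pow_neg1_double_divide N i);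
    try apply not_divide_double_add2; try assumption; try lia.
  field.
Qed.

Lemma sin_sum_double_divide_add2 (N i : nat) : (2 <= N)%nat ->
  Nat.divide (2 * N) (i + 2) -> sin_sum N i = - (INR N / 2).
Proof.
  intros HN Hi2.
  assert (Hi : ~ Nat.divide (2 * N) i) by (intro Hi; exact (not_divide_double_add2 N i HN Hi Hi2)).
  rewrite sin_sum_cos_sum, (cos_sum_double_divide N (i + 2)), cos_sum_not_double_divide,
    <- pow_neg1_add2, (pow_neg1_double_divide N (i + 2)) by (assumption || lia).
  field.
Qed.

Lemma sin_sum_mul (N nu : nat) : (3 <= N)%nat ->
  sin_sum N (nu * N) = INR N / 4 * (1 + (-1) ^ nu).
Proof.
  intro HN.
  destruct (Nat.Even_or_Odd nu) as [[t ->] | [t ->]].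
  - rewrite sin_sum_double_divide, pow_1_even by (lia || (exists t; lia)).
    field.
  - replace ((2 * t + 1) * N)%nat with (t * (2 * N) + N)%nat by lia.
    rewrite sin_sum_not_divide; [| lia | apply not_divide_mul_add; lia |].
    + replace (2 * t + 1)%nat with (S (2 * t)) by lia.
      rewrite pow_1_odd. field.
    + rewrite <- Nat.add_assoc. apply not_divide_mul_add. lia.
Qed.

Lemma sin_sum_mul_sub2 (N nu i : nat) : (3 <= N)%nat -> (i + 2 = nu * N)%nat ->
  sin_sum N i = - (INR N / 4 * (1 + (-1) ^ nu)).
Proof.
  intros HN Hi.
  destruct (Nat.Even_or_Odd nu) as [[t ->] | [t ->]].
  - rewrite sin_sum_double_divide_add2, pow_1_even by (lia || (exists t; lia)).
    field.
  - rewrite sin_sum_not_divide; [| lia | |].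
    + replace (2 * t + 1)%nat with (S (2 * t)) by lia.
      rewrite pow_1_odd. field.
    + replace i with (t * (2 * N) + (N - 2))%nat by lia.
      apply not_divide_mul_add. lia.
    + rewrite Hi. replace ((2 * t + 1) * N)%nat with (t * (2 * N) + N)%nat by lia.
      apply not_divide_mul_add. lia.
Qed.

Lemma sum_parity_nodes (f : nat -> R) (h m : nat) : f 0%nat = 0 ->
  sum_f_R0 (fun k => f (if Nat.odd m then 2 * S k else 2 * S k - 1)%nat) h
  = (sum_f_R0 f (2 * h + 2)
     - (-1) ^ m * sum_f_R0 (fun p => (-1) ^ p * f p) (2 * h + 2)) / 2.
Proof.
  intro f0.
  rewrite !sum_f_R0_pairs, f0, Rmult_0_r.
  transitivity (sum_f_R0 (fun k =>
      / 2 * (f (2 * k + 1)%nat + f (2 * k + 2)%nat)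
      + - ((-1) ^ m / 2) * ((-1) ^ (2 * k + 1) * f (2 * k + 1)%nat
                            + (-1) ^ (2 * k + 2) * f (2 * k + 2)%nat)) h).
  - apply sum_eq. intros k _.
    rewrite !pow_add, pow_1_even, pow_neg1_odd.
    destruct (Nat.odd m);
      [replace (2 * S k)%nat with (2 * k + 2)%nat by lia
      | replace (2 * S k - 1)%nat with (2 * k + 1)%nat by lia];
      cbn [pow]; field.
  - rewrite sum_f_R0_lin_comb. field.
Qed.

Lemma Isum_term (n i j m k : nat) : (1 <= k)%nat ->
  (1 - xnode n m ^ 2) * (1 - ynode n m k ^ 2) * chebU i (xnode n m) * chebU j (ynode n m k)
  = sin_prod (n + 2) i m * sin_prod (n + 3) j (if Nat.odd m then 2 * k else 2 * k - 1)%nat.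
Proof.
  intro Hk.
  assert (Hy : ynode n m k
               = cos (node_angle (n + 3) (if Nat.odd m then 2 * k else 2 * k - 1)%nat)).
  { unfold ynode, node_angle.
    destruct (Nat.odd m); rewrite ?minus_INR, mult_INR by lia; reflexivity. }
  rewrite Hy. unfold xnode, sin_prod.
  rewrite <- !one_sub_cos2_mul_chebU. unfold node_angle. ring.
Qed.

Lemma Isum_sin_sums (n i j : nat) : Nat.Even n ->
  Isum n i j
  = (sin_sum (n + 2) i * sin_sum (n + 3) j
     - sin_sum (n + 2) (i + (n + 2)) * sin_sum (n + 3) (j + (n + 3))) / 2.
Proof.
  intros [h ->]. unfold Isum.
  replace (2 * h / 2)%nat with h by (rewrite Nat.mul_comm, Nat.div_mul; lia).
  rewrite <- !alt_sin_sum by lia. unfold sin_sum.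
  replace (2 * h + 2 - 1)%nat with (S (2 * h)) by lia.
  replace (2 * h + 3 - 1)%nat with (2 * h + 2)%nat by lia.
  rewrite (decomp_sum (sin_prod _ i)), (decomp_sum (fun m => (-1) ^ m * sin_prod _ i m)) by lia.
  cbn [Nat.pred]. rewrite sin_prod_0, Rmult_0_r, !Rplus_0_l.
  set (B := sum_f_R0 (sin_prod (2 * h + 3) j) (2 * h + 2)).
  set (B' := sum_f_R0 (fun m => (-1) ^ m * sin_prod (2 * h + 3) j m) (2 * h + 2)).
  rewrite (sum_eq _ (fun m => / 2 * B * sin_prod (2 * h + 2) i (S m)
                           + - / 2 * B' * ((-1) ^ S m * sin_prod (2 * h + 2) i (S m)))).
  { rewrite sum_f_R0_lin_comb. field. }
  intros m _.
  rewrite (sum_eq _ (fun k => sin_prod (2 * h + 3) j (if Nat.odd (S m) then 2 * S k else 2 * S k - 1)%nat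
                              * sin_prod (2 * h + 2) i (S m)))
    by (intros k _; cbv zeta; rewrite Isum_term; [apply Rmult_comm | lia]).
  rewrite <- scal_sum, sum_parity_nodes by apply sin_prod_0.
  fold B B'. field.
Qed.

Lemma sin_sums_not_divide (N i : nat) : (0 < N)%nat ->
  ~ Nat.divide N i -> ~ Nat.divide N (i + 2) -> sin_sum N i = 0 /\ sin_sum N (i + N) = 0.
Proof.
  intros HN Hi Hi2.
  split; apply sin_sum_not_divide; try apply not_divide_double; auto using not_divide_add_self.
  replace (i + N + 2)%nat with (i + 2 + N)%nat by lia. auto using not_divide_add_self.
Qed.

Lemma sin_sums_mul (N nu : nat) : (3 <= N)%nat ->
  sin_sum N (nu * N) = INR N / 4 * (1 + (-1) ^ nu)
  /\ sin_sum N (nu * N + N) = INR N / 4 * (1 - (-1) ^ nu).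
Proof.
  intro HN. split; [apply sin_sum_mul, HN|].
  replace (nu * N + N)%nat with (S nu * N)%nat by lia.
  rewrite sin_sum_mul by exact HN. simpl. ring.
Qed.

Lemma sin_sums_mul_sub2 (N nu i : nat) : (3 <= N)%nat -> (i + 2 = nu * N)%nat ->
  sin_sum N i = - (INR N / 4 * (1 + (-1) ^ nu))
  /\ sin_sum N (i + N) = - (INR N / 4 * (1 - (-1) ^ nu)).
Proof.
  intros HN Hi. split; [apply sin_sum_mul_sub2; assumption|].
  rewrite (sin_sum_mul_sub2 N (S nu)) by lia. simpl. ring.
Qed.

Theorem proposition3 (n : nat) (Hpos : (0 < n)%nat) (Heven : Nat.Even n) :
  (forall i j : nat,
     (~ Nat.divide (n + 2) i /\ ~ Nat.divide (n + 2) (i + 2))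
     \/ (~ Nat.divide (n + 3) j /\ ~ Nat.divide (n + 3) (j + 2)) ->
     Isum n i j = 0)
  /\ (forall nu mu i j : nat,
        i = (nu * (n + 2))%nat -> j = (mu * (n + 3))%nat ->
        Isum n i j = / (2 * Cn n) * ((-1) ^ nu + (-1) ^ mu))
  /\ (forall nu mu i j : nat,
        i = (nu * (n + 2))%nat -> (j + 2)%nat = (mu * (n + 3))%nat ->
        Isum n i j = - (/ (2 * Cn n) * ((-1) ^ nu + (-1) ^ mu)))
  /\ (forall nu mu i j : nat,
        (i + 2)%nat = (nu * (n + 2))%nat -> j = (mu * (n + 3))%nat ->
        Isum n i j = - (/ (2 * Cn n) * ((-1) ^ nu + (-1) ^ mu)))
  /\ (forall nu mu i j : nat,
        (i + 2)%nat = (nu * (n + 2))%nat -> (j + 2)%nat = (mu * (n + 3))%nat ->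
        Isum n i j = / (2 * Cn n) * ((-1) ^ nu + (-1) ^ mu)).
Proof.
  assert (HN : (3 <= n + 2)%nat) by lia. assert (HM : (3 <= n + 3)%nat) by lia.
  assert (Hscale : / (2 * Cn n) = INR (n + 2) * INR (n + 3) / 16)
    by (unfold Cn; field; split; apply not_0_INR; lia).
  split; [|split; [|split; [|split]]].
  - intros i j [[Hi Hi2] | [Hj Hj2]]; rewrite Isum_sin_sums by exact Heven.
    + destruct (sin_sums_not_divide (n + 2) i ltac:(lia) Hi Hi2) as [-> ->]. field.
    + destruct (sin_sums_not_divide (n + 3) j ltac:(lia) Hj Hj2) as [-> ->]. field.
  - intros nu mu i j -> ->. rewrite Isum_sin_sums by exact Heven.
    destruct (sin_sums_mul _ nu HN) as [-> ->], (sin_sums_mul _ mu HM) as [-> ->].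
    rewrite Hscale. field.
  - intros nu mu i j -> Hj. rewrite Isum_sin_sums by exact Heven.
    destruct (sin_sums_mul _ nu HN) as [-> ->], (sin_sums_mul_sub2 _ mu j HM Hj) as [-> ->].
    rewrite Hscale. field.
  - intros nu mu i j Hi ->. rewrite Isum_sin_sums by exact Heven.
    destruct (sin_sums_mul_sub2 _ nu i HN Hi) as [-> ->], (sin_sums_mul _ mu HM) as [-> ->].
    rewrite Hscale. field.
  - intros nu mu i j Hi Hj. rewrite Isum_sin_sums by exact Heven.
    destruct (sin_sums_mul_sub2 _ nu i HN Hi) as [-> ->], (sin_sums_mul_sub2 _ mu j HM Hj) as [-> ->].
    rewrite Hscale. field.
Qed.
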